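(* Let $G$ be a maximal $3$-$\gamma_{c}$-vertex critical graph, let $I$ be a maximum independent set of $G$, and let $W$ be a vertex set inducing a maximum complete subgraph of $G$ such that $|I\cap W|$ is minimum. For every $w\in W$ and every minimum connected dominating set $D_{w}$ of $G-w$, we have $|D_{w}\cap W|=0$ and $|D_{w}\cap I|\leq 1$.
   Context: All graphs are finite, simple and connected. A set $D\subseteq V(G)$ is a connected dominating set of $G$ if every vertex of $G$ is in $D$ or adjacent to a vertex of $D$, and $G[D]$ is connected; $\gamma_{c}(G)$ is the minimum cardinality of such a set. $G$ is $k$-$\gamma_{c}$-edge critical if $\gamma_{c}(G)=k$ and $\gamma_{c}(G+uv)<k$ for every pair of non-adjacent vertices $u,v$. A $2$-connected graph $G$ is $k$-$\gamma_{c}$-vertex critical if $\gamma_{c}(G)=k$ and $\gamma_{c}(G-v)<k$ for every $v\in V(G)$. $G$ is maximal $k$-$\gamma_{c}$-vertex critical if it is both $k$-$\gamma_{c}$-edge critical and $k$-$\gamma_{c}$-vertex critical. *)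

(* A graph on vertex type T : finType is a relation e : rel T
   (simple graph: symmetric and irreflexive). Subgraphs obtained by deleting
   vertices are represented by a vertex set V : {set T} with induced edges. *)
From mathcomp Require Import all_boot.
Set Implicit Arguments. Unset Strict Implicit. Unset Printing Implicit Defensive.

Section Graphs.
Variable T : finType.

Definition simple_graph (e : rel T) : Prop := symmetric e /\ irreflexive e.

Definition induced (e : rel T) (S : {set T}) : rel T :=
  [rel x y | [&& x \in S, y \in S & e x y]].

Definition connected_in (e : rel T) (S : {set T}) : bool :=
  [forall x in S, forall y in S, connect (induced e S) x y].

Definition cds (e : rel T) (V D : {set T}) : bool :=
  [&& D \subset V,
      [forall x in V, (x \in D) || [exists y in D, e x y]]
    & connected_in e D].

(* connected domination number gamma_c(G[V]) (= #|T|.+1 if no CDS exists) *)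
Definition gamma_c (e : rel T) (V : {set T}) : nat :=
  \big[minn/#|T|.+1]_(D : {set T} | cds e V D) #|D|.

Definition add_edge (e : rel T) (u v : T) : rel T :=
  [rel x y | [|| e x y, (x == u) && (y == v) | (x == v) && (y == u)]].

Definition del_vertex (v : T) : {set T} := [set: T] :\ v.

Definition connected_graph (e : rel T) : Prop := connected_in e [set: T].

Definition two_connected (e : rel T) : Prop :=
  2 < #|T| /\ connected_graph e /\ forall v : T, connected_in e (del_vertex v).

Definition edge_critical (k : nat) (e : rel T) : Prop :=
  gamma_c e [set: T] = k /\
  forall u v : T, u != v -> ~~ e u v -> gamma_c (add_edge e u v) [set: T] < k.

Definition vertex_critical (k : nat) (e : rel T) : Prop :=
  two_connected e /\ gamma_c e [set: T] = k /\
  forall v : T, gamma_c e (del_vertex v) < k.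

Definition maximal_vertex_critical (k : nat) (e : rel T) : Prop :=
  edge_critical k e /\ vertex_critical k e.

Definition independent (e : rel T) (I : {set T}) : bool :=
  [forall x in I, forall y in I, ~~ e x y].

Definition max_independent (e : rel T) (I : {set T}) : Prop :=
  independent e I /\ forall J : {set T}, independent e J -> #|J| <= #|I|.

Definition clique (e : rel T) (W : {set T}) : bool :=
  [forall x in W, forall y in W, (x != y) ==> e x y].

Definition max_clique (e : rel T) (W : {set T}) : Prop :=
  clique e W /\ forall W' : {set T}, clique e W' -> #|W'| <= #|W|.

End Graphs.

(* Vertex criticality gives gamma_c(G - w) <= 2, so D_w has at most two
   vertices.  A vertex of D_w in the clique W is adjacent to w, so D_w would
   then be a connected dominating set of G itself, of size < 3 = gamma_c(G).
   Two vertices of I in D_w would make D_w a connected pair of non-adjacent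
   vertices. *)
From mathcomp Require Import all_boot.
Set Implicit Arguments. Unset Strict Implicit. Unset Printing Implicit Defensive.

Lemma geq_bigmin_seq_cond (I : eqType) (r : seq I) (P : pred I) (F : I -> nat)
    x0 j :
  j \in r -> P j -> \big[minn/x0]_(i <- r | P i) F i <= F j.
Proof.
elim: r => //= a r IH; rewrite inE big_cons => /orP[/eqP<- Pj|jr Pj].
  by rewrite Pj geq_minl.
case: (P a); last exact: IH.
exact: leq_trans (geq_minr _ _) (IH jr Pj).
Qed.

Section ConnectedDomination.
Variables (T : finType) (e : rel T).

Lemma gamma_c_le_card V D : cds e V D -> gamma_c e V <= #|D|.
Proof. by move=> cdsD; apply: geq_bigmin_seq_cond; rewrite ?mem_index_enum. Qed.

Lemma independentP I x y : independent e I -> x \in I -> y \in I -> ~~ e x y.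
Proof. by move=> /forallP/(_ x)/implyP IH /IH/forallP/(_ y)/implyP. Qed.

Lemma cliqueP W x y : clique e W -> x \in W -> y \in W -> x != y -> e x y.
Proof.
by move=> /forallP/(_ x)/implyP WH /WH/forallP/(_ y)/implyP WHy /WHy/implyP.
Qed.

Lemma connected_in_set2 a b :
  a != b -> connected_in e [set a; b] -> e a b || e b a.
Proof.
move=> ab /forallP/(_ a); rewrite set21 => /forallP/(_ b); rewrite set22 /=.
apply: contraLR; rewrite negb_or => /andP[nab nba].
have closed_a : closed (induced e [set a; b]) (pred1 a).
  move=> x y /and3P[/set2P[]-> /set2P[]-> exy]; rewrite ?eqxx //.
  - by rewrite exy in nab.
  - by rewrite exy in nba.
by apply/negP => /(closed_connect closed_a); rewrite !inE eqxx eq_sym (negbTE ab).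
Qed.

Lemma cds_del_vertex_adj w u D :
  cds e (del_vertex w) D -> u \in D -> e w u -> cds e [set: T] D.
Proof.
case/and3P=> _ domD conD uD ewu; rewrite /cds subsetT conD andbT.
apply/forall_inP => x _; have [->|xw] := eqVneq x w.
  by apply/orP; right; apply/existsP; exists u; rewrite uD.
by apply: (forall_inP domD); rewrite !inE xw.
Qed.

End ConnectedDomination.

Theorem lemma3p4 (T : finType) (e : rel T) (I W : {set T}) :
  simple_graph e -> connected_graph e ->
  maximal_vertex_critical 3 e ->
  max_independent e I ->
  max_clique e W ->
  (forall W' : {set T}, max_clique e W' -> #|I :&: W| <= #|I :&: W'|) ->
  forall (w : T) (Dw : {set T}), w \in W ->
    cds e (del_vertex w) Dw -> #|Dw| = gamma_c e (del_vertex w) ->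
    #|Dw :&: W| = 0 /\ #|Dw :&: I| <= 1.
Proof.
move=> _ _ [_ [_ [gammaG crit]]] [indI _] [clW _] _ w Dw wW cdsD minD.
have Dw_le2 : #|Dw| <= 2 by rewrite -ltnS minD crit.
split.
  apply/eqP; rewrite cards_eq0; apply: contraTT Dw_le2 => /set0Pn[u /setIP[uD uW]].
  have wu : w != u.
    by have /and3P[/subsetP/(_ u uD)] := cdsD; rewrite !inE eq_sym => /andP[].
  have cdsG := cds_del_vertex_adj cdsD uD (cliqueP clW wW uW wu).
  by rewrite -ltnNge -gammaG gamma_c_le_card.
rewrite leqNgt; apply/negP => /card_gt1P[a [b []]].
rewrite !inE => /andP[aD aI] /andP[bD bI] ab.
have Dw_ab : Dw = [set a; b].
  apply/eqP; rewrite eq_sym eqEcard cards2 ab Dw_le2 andbT.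
  by apply/subsetP => x /set2P[]->.
have /and3P[_ _ conD] := cdsD; rewrite Dw_ab in conD.
have := connected_in_set2 ab conD.
by rewrite (negbTE (independentP indI aI bI)) (negbTE (independentP indI bI aI)).
Qed.
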